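(* Let $\mathcal{X}\times\mathcal{Y}$ be a sample space, $\mathcal{H}$ a set of hypotheses $h:\mathcal{X}\to\mathcal{Y}$, $n\in\mathbb{N}$, and let $\mathcal{A}$ be a (possibly randomized) learning algorithm, i.e. a Markov kernel $\mathcal{P}_{H|S}$ from $(\mathcal{X}\times\mathcal{Y})^n$ to $\mathcal{H}$. Let $S\sim\mathcal{P}^n$ for some distribution $\mathcal{P}$ on $\mathcal{X}\times\mathcal{Y}$, let $H=\mathcal{A}(S)$, and assume the joint law $\mathcal{P}_{SH}$ satisfies $\mathcal{P}_{SH}\ll\mathcal{P}_S\mathcal{P}_H$. Let $\ell$ be the $0$-$1$ loss. Given $\eta\in(0,1)$, let $E=\{(s,h):|L_{\mathcal{P}}(h)-L_s(h)|>\eta\}$. Then for every $\alpha>1$, $$\mathbb{P}((S,\mathcal{A}(S))\in E)\le\exp\left(\frac{\alpha-1}{\alpha}\left(I_\alpha(S;\mathcal{A}(S))+\log 2-2n\eta^2\right)\right).$$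
   Context: The $0$-$1$ loss is $\ell(h,(x,y))=\mathbb{1}_{h(x)\neq y}$. The population risk is $L_{\mathcal{P}}(h)=\mathbb{E}_{(x,y)\sim\mathcal{P}}[\ell(h,(x,y))]=\mathcal{P}(\{(x,y):h(x)\ne y\})$, and for $s=((x_1,y_1),\dots,(x_n,y_n))$ the empirical risk is $L_s(h)=\frac1n\sum_{i=1}^n\ell(h,(x_i,y_i))$. Sibson's $\alpha$-mutual information is $I_\alpha(S;H)=\min_{Q_H}D_\alpha(\mathcal{P}_{SH}\|\mathcal{P}_SQ_H)$, where $D_\alpha(\mathcal{P}\|\mathcal{Q})=\frac{1}{\alpha-1}\ln\int p^\alpha q^{1-\alpha}d\mu$ is the Rényi divergence. Logarithms are natural. Measurability of all relevant sets and maps is assumed. *)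

From HB Require Import structures.
From mathcomp Require Import all_boot all_order all_algebra.
From mathcomp Require Import all_classical all_reals all_analysis.
Set Implicit Arguments. Unset Strict Implicit. Unset Printing Implicit Defensive.
Import Order.TTheory GRing.Theory Num.Theory.
Import numFieldNormedType.Exports.
Local Open Scope classical_set_scope.
Local Open Scope ring_scope.

Section Defs.
Context (R : realType).

(** [Pn] is the n-fold product P^n of [P] on [n.-tuple T]: its value on every
    measurable rectangle is the product of the marginal probabilities (this
    determines the measure uniquely). *)
Definition is_product_measure d (T : measurableType d) (n : nat)
  (P : set T -> \bar R) (Pn : set (n.-tuple T) -> \bar R) : Prop :=
  forall A : 'I_n -> set T, (forall i, measurable (A i)) ->
    Pn [set t | forall i, A i (tnth t i)] = (\prod_(i < n) P (A i))%E.

Definition joint_law d d' (TS : measurableType d) (TH : measurableType d')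
  (PS : set TS -> \bar R) (k : TS -> {measure set TH -> \bar R}) : set (TS * TH) -> \bar R :=
  fun A => (\int[PS]_s k s (xsection A s))%E.

Definition out_law d d' (TS : measurableType d) (TH : measurableType d')
  (PS : set TS -> \bar R) (k : TS -> {measure set TH -> \bar R}) : set TH -> \bar R :=
  fun B => (\int[PS]_s k s B)%E.

Definition is_density d (T : measurableType d) (nu mu : set T -> \bar R)
  (f : T -> R) : Prop :=
  [/\ measurable_fun setT f, (forall x, 0 <= f x) &
      forall A, measurable A -> nu A = (\int[mu]_(x in A) (f x)%:E)%E].

(** Renyi divergence of order a > 1:
    D_a(nu || mu) = 1/(a-1) ln \int (dnu/dmu)^a dmu  if nu << mu, +oo otherwise.
    (This is the formula (1/(a-1)) ln \int p^a q^(1-a) dmu0 with the dominating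
    measure mu0 := mu, q = 1, p = dnu/dmu.)  All densities coincide mu-a.e., so
    the infimum below is over a set with one element, or over the empty set
    (giving +oo) when no density exists. *)
Definition renyi_div d (T : measurableType d) (a : R) (nu mu : set T -> \bar R)
  : \bar R :=
  ereal_inf [set v | exists f, is_density nu mu f /\
     v = ((a - 1)^-1)%:E * lne (\int[mu]_x ((f x) `^ a)%:E)]%E.

Definition sibson_mi d d' (TS : measurableType d) (TH : measurableType d')
  (a : R) (PS : set TS -> \bar R) (PSH : set (TS * TH) -> \bar R) : \bar R :=
  ereal_inf [set v | exists Q : probability TH R,
     v = renyi_div a PSH (product_measure1 PS Q)].

Definition loss01 (H X Y : Type) (ev : H -> X -> Y) (h : H) (z : X * Y) : R :=
  \1_[set z' : X * Y | ev h z'.1 <> z'.2] z.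

Definition pop_risk (H X Y : Type) (ev : H -> X -> Y) (P : set (X * Y) -> \bar R) (h : H) : R :=
  fine (P [set z | ev h z.1 <> z.2]).

Definition emp_risk (H X Y : Type) (n : nat) (ev : H -> X -> Y)
  (s : n.-tuple (X * Y)) (h : H) : R :=
  n%:R^-1 * \sum_(i < n) loss01 ev h (tnth s i).

End Defs.
Arguments emp_risk {R H X Y n}.
Arguments loss01 {R H X Y}.

(* For a fixed hypothesis h the losses of the n sample points are independent
   Bernoulli variables with mean L_P(h), so the section of E at h is a binomial
   tail event; Chernoff's bound with Hoeffding's lemma gives it probability at
   most c = 2 exp(-2 n eta^2), and by Fubini E has mass at most c under every
   product P_S x Q.  Hoelder's inequality with exponents alpha and
   alpha / (alpha - 1), applied to a density f of P_SH with respect to P_S x Q,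
   then yields P_SH(E) <= ||f||_alpha c^((alpha - 1) / alpha)
   = exp((alpha - 1) / alpha (D_alpha(P_SH || P_S x Q) + ln c)), and the
   infimum over Q gives Sibson's mutual information. *)

From HB Require Import structures.
From mathcomp Require Import all_boot all_order all_algebra.
From mathcomp Require Import all_classical all_reals all_analysis.
From mathcomp Require Import ring lra measurable_realfun.
Import Order.TTheory GRing.Theory Num.Theory.
Import numFieldNormedType.Exports.
Local Open Scope classical_set_scope.
Local Open Scope ring_scope.

Lemma is_derive_ge0_ler {R : realType} (f df : R -> R) (a b : R) :
  (forall x : R, is_derive x (1 : R) f (df x)) -> (forall x, a <= x <= b -> 0 <= df x) ->
  a <= b -> f a <= f b.
Proof.
move=> f'df df_ge0 ab; apply: ger0_derive1_ndecr => //.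
- move=> x; rewrite in_itv /= => /andP[ax xb].
  by rewrite derive1E (@derive_val _ _ _ _ _ _ _ (f'df x)) df_ge0 // !ltW.
- apply: continuous_subspaceT => x.
  exact/differentiable_continuous/derivable1_diffP/(@ex_derive _ _ _ _ _ _ _ (f'df x)).
Qed.

Section hoeffding_lemma.
Context {R : realType} (p : R).
Hypothesis p01 : 0 <= p <= 1.

(* [gap l] is the slack in the logarithm of Hoeffding's lemma: it vanishes at
   [0] and its derivative [gap'] has the sign of its argument. *)
Let mgf (x : R) := 1 - p + p * expR x.
Let tilt (x : R) := p * expR x / mgf x.
Let gap (x : R) := x * p + x ^+ 2 / 8 - ln (mgf x).
Let gap' (x : R) := p + x / 4 - tilt x.

Let mgf_gt0 x : 0 < mgf x.
Proof.
have /andP[p0 p1] := p01; rewrite /mgf.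
have [->|p_neq1] := eqVneq p 1; first by rewrite subrr add0r mul1r expR_gt0.
rewrite ltr_wpDr ?mulr_ge0 ?expR_ge0 // subr_gt0 lt_neqAle p_neq1 //.
Qed.

Let is_derive_mgf x : is_derive x (1 : R) mgf (p * expR x).
Proof. by apply: is_derive_eq; rewrite add0r mul1r. Qed.

Let is_derive_tilt x : is_derive x (1 : R) tilt (tilt x * (1 - tilt x)).
Proof.
have mgf_neq0 := lt0r_neq0 (mgf_gt0 x).
apply: is_derive_eq; rewrite /tilt /GRing.scale /=.
by move: (mgf x) mgf_neq0 => m m_neq0; field.
Qed.

(* The derivative of [gap'] is [1/4 - tilt (1 - tilt)], a perfect square. *)
Let is_derive_gap' x : is_derive x (1 : R) gap' ((tilt x - 2^-1) ^+ 2).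
Proof.
(* [is_derive_eq] looks up the derivatives of subterms among the hypotheses. *)
have := is_derive_tilt x => tilt'.
by apply: is_derive_eq; rewrite /GRing.scale /=; field.
Qed.

Let is_derive_gap x : is_derive x (1 : R) gap (gap' x).
Proof.
have := is_derive1_comp (is_derive1_ln (mgf_gt0 x)) (is_derive_mgf x) => ln_mgf'.
apply: is_derive_eq; rewrite /gap' /tilt /GRing.scale /=.
by move: (mgf x) (lt0r_neq0 (mgf_gt0 x)) => m m_neq0; field.
Qed.

Let mgf0 : mgf 0 = 1. Proof. by rewrite /mgf expR0 mulr1 subrK. Qed.

Let gap'_sign x : (0 <= x -> 0 <= gap' x) /\ (x <= 0 -> gap' x <= 0).
Proof.
have gap'0 : gap' 0 = 0.
  by rewrite /gap' /tilt mgf0 expR0 mulr1 divr1 mul0r addr0 subrr.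
have gap'_mono a b : a <= b -> gap' a <= gap' b.
  move=> ab; apply: (@is_derive_ge0_ler _ _ _ a b is_derive_gap') ab.
  by move=> y _; exact: sqr_ge0.
by split=> ?; rewrite -gap'0 gap'_mono.
Qed.

Let gap_ge0 x : 0 <= gap x.
Proof.
have gap0 : gap 0 = 0 by rewrite /gap mgf0 ln1 mul0r expr0n /= mul0r add0r subrr.
have [x_ge0|x_lt0] := leP 0 x.
  rewrite -gap0; apply: (@is_derive_ge0_ler _ _ _ 0 x is_derive_gap) x_ge0.
  move=> y /andP[y_ge0 _].
  by case: (gap'_sign y) => + _; apply.
rewrite -gap0 -[leRHS]opprK -[leLHS]opprK lerN2.
have neg_gap' y : is_derive y (1 : R) (fun z => - gap z) (- gap' y).
  by have := is_derive_gap y => gap'y; apply: is_derive_eq.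
apply: (@is_derive_ge0_ler _ _ _ x 0 neg_gap') (ltW x_lt0).
by move=> y /andP[_ y_le0]; rewrite oppr_ge0; case: (gap'_sign y) => _; apply.
Qed.

Lemma hoeffding_lemma l : 1 - p + p * expR l <= expR (l * p + l ^+ 2 / 8).
Proof.
have := gap_ge0 l; rewrite /gap subr_ge0 -ler_expR lnK //.
by rewrite posrE mgf_gt0.
Qed.

End hoeffding_lemma.

Lemma deviation_one_sided {R : realFieldType} (N p eta x lam : R) :
  0 <= N -> 0 < lam -> eta < `|p - x| ->
  (0 <= lam * (N * x - N * (p + eta))) || (0 <= - lam * (N * x - N * (p - eta))).
Proof.
move=> N_ge0 lam_gt0; rewrite ltr_normr => /orP[lo|up].
- apply/orP; right.
  have -> : - lam * (N * x - N * (p - eta)) = lam * N * (p - eta - x) by ring.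
  by rewrite !mulr_ge0 ?(ltW lam_gt0) //; lra.
- apply/orP; left.
  have -> : lam * (N * x - N * (p + eta)) = lam * N * (x - p - eta) by ring.
  by rewrite !mulr_ge0 ?(ltW lam_gt0) //; lra.
Qed.

Definition bernoulli_pmf {R : realType} {n : nat} (p : R) (f : {ffun 'I_n -> bool}) : R :=
  \prod_(i < n) (if f i then p else 1 - p).

Section bernoulli_tail.
Context {R : realType} (n : nat) (p : R).
Hypothesis p01 : 0 <= p <= 1.

Let nsucc (f : {ffun 'I_n -> bool}) : R := \sum_(i < n) (f i)%:R.

Let bernoulli_pmf_ge0 (f : {ffun 'I_n -> bool}) : 0 <= bernoulli_pmf p f.
Proof.
have /andP[p0 p1] := p01.
by apply: prodr_ge0 => i _; case: (f i); lra.
Qed.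

(* Markov's inequality for [expR (lam * (nsucc - t))], then independence
   factorizes the exponential moment and Hoeffding's lemma bounds each factor. *)
Lemma bernoulli_chernoff lam t :
  \sum_(f | 0 <= lam * (nsucc f - t)) bernoulli_pmf p f
  <= expR (- (lam * t) + n%:R * (lam * p + lam ^+ 2 / 8)).
Proof.
have /andP[p0 p1] := p01.
apply: (@le_trans _ _ (\sum_f bernoulli_pmf p f * expR (lam * (nsucc f - t)))).
  rewrite big_mkcond /=; apply: ler_sum => f _.
  case: ifP => [dev|_]; last by rewrite mulr_ge0 ?expR_ge0.
  rewrite -[leLHS]mulr1 ler_wpM2l //.
  by apply: le_trans (expR_ge1Dx _); rewrite lerDl.
under eq_bigr => f _ do rewrite /bernoulli_pmf /nsucc mulrBr expRB mulr_sumr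
  expR_sum mulrA -big_split /= (mulrC _ (expR (lam * t))^-1).
rewrite -mulr_sumr -(bigA_distr_bigA (fun (i : 'I_n) (b : bool) =>
  (if b then p else 1 - p) * expR (lam * b%:R))) /=.
under eq_bigr => i _ do rewrite big_bool /= mulr1 mulr0 expR0 mulr1.
rewrite prodr_const card_ord expRD expRN ler_pM2l ?invr_gt0 ?expR_gt0 //.
rewrite expRM_natl; apply: lerXn2r; rewrite ?nnegrE ?expR_ge0 //.
  by rewrite addr_ge0 ?mulr_ge0 ?expR_ge0 // subr_ge0.
by rewrite addrC; exact: hoeffding_lemma.
Qed.

(* Chernoff with [lam = 4 eta] for the upper and [lam = - 4 eta] for the lower
   tail; this choice makes both exponents equal to [- 2 n eta^2]. *)
Lemma bernoulli_tail eta : 0 < eta ->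
  \sum_(f | eta < `|p - n%:R^-1 * nsucc f|) bernoulli_pmf p f
  <= 2 * expR (- (2 * n%:R * eta ^+ 2)).
Proof.
move=> eta_gt0.
have nsuccE f : nsucc f = n%:R * (n%:R^-1 * nsucc f).
  have [n0|n_neq0] := eqVneq n 0; last by rewrite mulrA mulfV ?mul1r ?pnatr_eq0.
  by rewrite /nsucc big1 ?mulr0 // => i; have := ltn_ord i; rewrite {2}n0.
pose up f := 0 <= 4 * eta * (nsucc f - n%:R * (p + eta)).
pose lo f := 0 <= - (4 * eta) * (nsucc f - n%:R * (p - eta)).
apply: (@le_trans _ _ (\sum_(f | up f) bernoulli_pmf p f +
                       \sum_(f | lo f) bernoulli_pmf p f)).
  rewrite [leLHS]big_mkcond [X in X + _]big_mkcond [X in _ + X]big_mkcond.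
  rewrite -big_split /=; apply: ler_sum => f _.
  case: ifP => [dev|_]; last by rewrite addr_ge0 //; case: ifP.
  have /orP[up_f|lo_f] : up f || lo f.
    rewrite /up /lo [nsucc f]nsuccE.
    by apply: deviation_one_sided; rewrite ?mulr_gt0 // -nsuccE.
  - by rewrite up_f lerDl; case: ifP.
  - by rewrite lo_f lerDr; case: ifP.
have up_exp : - (4 * eta * (n%:R * (p + eta))) +
    n%:R * (4 * eta * p + (4 * eta) ^+ 2 / 8) = - (2 * n%:R * eta ^+ 2) by field.
have lo_exp : - (- (4 * eta) * (n%:R * (p - eta))) +
    n%:R * (- (4 * eta) * p + (- (4 * eta)) ^+ 2 / 8) = - (2 * n%:R * eta ^+ 2).
  by field.
have := bernoulli_chernoff (4 * eta) (n%:R * (p + eta)); rewrite up_exp => up_le.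
have := bernoulli_chernoff (- (4 * eta)) (n%:R * (p - eta)); rewrite lo_exp => lo_le.
by rewrite mulr2n mulrDl mul1r lerD.
Qed.

End bernoulli_tail.

Lemma measurable_tuple_rect {d} {T : measurableType d} (n : nat)
    (A : 'I_n -> set T) : (forall i, measurable (A i)) ->
  measurable [set t : n.-tuple T | forall i, A i (tnth t i)].
Proof.
move=> mA; have -> : [set t : n.-tuple T | forall i, A i (tnth t i)] =
    \bigcap_(i in [set: 'I_n]) ((fun t => tnth t i) @^-1` A i).
  by apply/seteqP; split => t /= At i; [move=> _; exact: At | exact: At].
apply: fin_bigcap_measurable; first exact: finite_finset.
by move=> i _; rewrite -[X in measurable X]setTI; exact: measurable_tnth.
Qed.

Section product_measure_hoeffding.
Context {R : realType} {d} {T : measurableType d} (n : nat).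
Context (P : probability T R) (Pn : probability (n.-tuple T) R).
Hypothesis Pn_prod : is_product_measure P Pn.
Variable B : set T.
Hypothesis mB : measurable B.

Let pB := fine (P B).

Let pB01 : 0 <= pB <= 1.
Proof.
rewrite fine_ge0 ?measure_ge0 //= -lee_fin fineK ?fin_num_measure //.
exact: probability_le1.
Qed.

(* [pattern t] records which coordinates of [t] fall in [B]; under [Pn] it is
   distributed as [n] independent Bernoulli([P B]) variables. *)
Let pattern (t : n.-tuple T) : {ffun 'I_n -> bool} := [ffun i => `[< B (tnth t i) >]].

Let pattern_fiberE (f : {ffun 'I_n -> bool}) :
  pattern @^-1` [set f] = [set t | forall i, (if f i then B else ~` B) (tnth t i)].
Proof.
apply/seteqP; split => t /=.
  by move=> <- i; rewrite ffunE; case: asboolP.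
move=> tf; apply/ffunP => i; rewrite ffunE.
by have := tf i; case: (f i) => ?; apply/asboolP.
Qed.

Let measurable_literal (f : {ffun 'I_n -> bool}) i :
  measurable (if f i then B else ~` B).
Proof. by case: (f i) => //; exact: measurableC. Qed.

Let measurable_pattern_fiber f : measurable (pattern @^-1` [set f]).
Proof.
by rewrite pattern_fiberE; exact: measurable_tuple_rect (measurable_literal f).
Qed.

Let Pn_pattern_fiber f : Pn (pattern @^-1` [set f]) = (bernoulli_pmf pB f)%:E.
Proof.
rewrite pattern_fiberE (Pn_prod _ (measurable_literal f)).
rewrite -prodEFin; apply: eq_bigr => i _; case: (f i) => /=.
  by rewrite fineK ?fin_num_measure.
by rewrite probability_setC // EFinB fineK ?fin_num_measure.
Qed.

Let Pn_pattern_preimage (S : set {ffun 'I_n -> bool}) :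
  Pn (pattern @^-1` S) = (\sum_(f | `[< S f >]) bernoulli_pmf pB f)%:E.
Proof.
have -> : pattern @^-1` S = \bigcup_(f in S) pattern @^-1` [set f].
  by apply/seteqP; split => t /=; [exists (pattern t)|case=> f Sf ->].
rewrite measure_fin_bigcup //; last 2 first.
- exact: finite_finset.
- by move=> f g _ _ [t [/= <- <-]].
rewrite (_ : (\sum_(f \in S) _ = \sum_(f \in S) (bernoulli_pmf pB f)%:E)%E); last first.
  by apply: eq_fsbigr => f _; exact: Pn_pattern_fiber.
rewrite fsumEFin; last exact: finite_finset.
rewrite fsbig_mkcond (fsbigE (index_enum _)) ?index_enum_uniq //; last first.
  by move=> f _; rewrite mem_index_enum.
congr EFin; rewrite big_mkcond [RHS]big_mkcond; apply: eq_bigr => f _.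
by rewrite in_setT /patch /=.
Qed.

Lemma product_measure_hoeffding (eta : R) : 0 < eta ->
  (Pn [set t | (eta < `|fine (P B) - n%:R^-1 * \sum_(i < n) \1_B (tnth t i)|)%R]
    <= (2 * expR (- (2 * n%:R * eta ^+ 2)))%:E)%E.
Proof.
move=> eta_gt0; rewrite -/pB.
have -> : [set t | eta < `|pB - n%:R^-1 * \sum_(i < n) \1_B (tnth t i)|] =
    pattern @^-1` [set f : {ffun 'I_n -> bool} |
                   eta < `|pB - n%:R^-1 * \sum_(i < n) (f i)%:R|].
  apply: eq_set => t; congr (_ < `|_ - _ * _|); apply: eq_bigr => i _.
  by rewrite indicE /pattern ffunE.
rewrite Pn_pattern_preimage lee_fin.
under eq_bigl => f do rewrite /= asboolb.
exact: bernoulli_tail.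
Qed.

End product_measure_hoeffding.

Section density_bounds.
Context {R : realType} {d} {T : measurableType d}.
Context {mu : {measure set T -> \bar R}} {nu : set T -> \bar R} {f : T -> R}.
Hypothesis f_dens : is_density nu mu f.
Context {E : set T} {a c : R}.
Hypotheses (mE : measurable E) (a_gt1 : 1 < a) (c_gt0 : 0 < c).
Hypothesis muE : (mu E <= c%:E)%E.
Local Open Scope ereal_scope.

(* Hoelder's inequality for [f * \1_E] with exponents [a] and [a / (a - 1)]. *)
Lemma density_hoelder_bound :
  nu E <= (\int[mu]_x ((f x) `^ a)%:E) `^ (a^-1) * (c `^ ((a - 1) / a))%:E.
Proof.
have [mf f_ge0 nuE] := f_dens.
have a_gt0 : (0 < a)%R by apply: lt_trans a_gt1.
pose q := (a / (a - 1))%R.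
have q_gt0 : (0 < q)%R by rewrite divr_gt0 // subr_gt0.
have conj_aq : (a^-1 + q^-1 = 1)%R.
  by rewrite /q invf_div; field; rewrite gt_eqF.
have m1E : measurable_fun setT (\1_E : T -> R) by apply/measurable_indicP.
have := hoelder mu mf m1E a_gt0 q_gt0 conj_aq; rewrite Lnorm1.
have -> : \int[mu]_x `|(EFin \o (f \* \1_E)%R) x| = nu E.
  rewrite nuE // [RHS]integral_mkcond; apply: eq_integral => x _.
  rewrite /patch /= indicE; case: (x \in E) => /=.
    by rewrite mulr1 ger0_norm.
  by rewrite mulr0 normr0.
move/le_trans; apply.
have -> : Lnorm mu a%:E (EFin \o f) = (\int[mu]_x ((f x) `^ a)%:E) `^ (a^-1).
  rewrite unlock /=; congr (_ `^ _); apply: eq_integral => x _.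
  by rewrite /= ger0_norm // poweR_EFin.
have -> : Lnorm mu q%:E (EFin \o \1_E) = mu E `^ (q^-1).
  rewrite unlock /=; congr (_ `^ _).
  rewrite -[in RHS](setIT E) -integral_indic //; apply: eq_integral => x _.
  by rewrite /= indicE; case: (x \in E); rewrite /= ?normr1 ?powR1 ?normr0 ?powR0 ?gt_eqF.
apply: lee_wpmul2l; first exact: poweR_ge0.
have -> : ((a - 1) / a = q^-1)%R by rewrite /q invf_div.
rewrite -poweR_EFin; apply: gt0_ler_poweR => //.
- by rewrite invr_ge0 ltW.
- by rewrite in_itv /= measure_ge0 leey.
- by rewrite in_itv /= lee_fin ltW // leey.
Qed.

Lemma density_renyi_bound :
  nu E <= expeR (((a - 1) / a)%:E *
    (((a - 1)^-1)%:E * lne (\int[mu]_x ((f x) `^ a)%:E) + (ln c)%:E)).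
Proof.
have a_gt0 : (0 < a)%R by apply: lt_trans a_gt1.
have th_gt0 : (0 < (a - 1) / a)%R by rewrite divr_gt0 // subr_gt0.
have I_ge0 : 0 <= \int[mu]_x ((f x) `^ a)%:E.
  by apply: integral_ge0 => x _; rewrite lee_fin powR_ge0.
move: I_ge0 density_hoelder_bound.
case: (\int[mu]_x ((f x) `^ a)%:E) => [r| |] // + nuE_le; last first.
  move=> _; rewrite gt0_muley ?lte_fin ?invr_gt0 ?subr_gt0 // addye //.
  by rewrite gt0_muley ?lte_fin //= leey.
rewrite lee_fin le_eqVlt => /orP[/eqP r0|r_gt0].
  apply: le_trans nuE_le _.
  by rewrite -r0 poweR0r ?invr_neq0 ?gt_eqF // mul0e expeR_ge0.
apply: le_trans nuE_le _.
rewrite lne_EFin // poweR_EFin -!EFinM /= lee_fin /powR !gt_eqF // -expRD.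
rewrite ler_expR le_eqVlt; apply/orP; left; apply/eqP.
by field; rewrite ?gt_eqF // subr_gt0.
Qed.

End density_bounds.

Lemma product_measure1_ysection_le {R : realType} {d1 d2}
    {T1 : measurableType d1} {T2 : measurableType d2}
    (P1 : probability T1 R) (Q : probability T2 R) (E : set (T1 * T2)) (c : R) :
  (0 <= c)%R -> measurable E -> (forall y, (P1 (ysection E y) <= c%:E)%E) ->
  (product_measure1 P1 Q E <= c%:E)%E.
Proof.
move=> c_ge0 mE P1E_le.
have := indic_fubini_tonelli P1 Q mE.
rewrite indic_fubini_tonelli_FE // indic_fubini_tonelli_GE // /product_measure1 => ->.
apply: (@le_trans _ _ (\int[Q]_y c%:E)%E).
  apply: ge0_le_integral => //.
  - exact: measurable_fun_ysection.
  - by move=> y _; exact: P1E_le.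
rewrite integral_cst // -[leRHS]mule1 lee_wpmul2l ?lee_fin //.
exact: probability_le1.
Qed.

Lemma le_expeR_ereal_inf {R : realType} (y K : \bar R) (th : R) (S : set (\bar R)) :
  (0 < th)%R -> K \is a fin_num -> (0 <= y)%E ->
  (forall v, S v -> y <= expeR (th%:E * (v + K)))%E ->
  (y <= expeR (th%:E * (ereal_inf S + K)))%E.
Proof.
move=> th_gt0 K_fin y_ge0 yS.
have boundE z : (y <= expeR (th%:E * (z + K)))%E = (th^-1%:E * lne y - K <= z)%E.
  rewrite -lee_lne; first last.
  - by rewrite in_itv /= expeR_ge0 leey.
  - by rewrite in_itv /= y_ge0 leey.
  by rewrite expeRK leeBlDr // lee_pdivrMl.
by rewrite boundE; apply: le_ereal_inf_tmp => v Sv; rewrite -boundE; exact: yS.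
Qed.

Lemma product_measure1_risk_deviation {R : realType} {dX dY dH}
    {X : measurableType dX} {Y : measurableType dY} {H : measurableType dH}
    {ev : H -> X -> Y} {n : nat} {P : probability (X * Y)%type R}
    {Pn : probability (n.-tuple (X * Y)%type) R} (Q : probability H R) {eta : R} :
  is_product_measure P Pn ->
  measurable [set p : H * (X * Y) | ev p.1 p.2.1 <> p.2.2] -> 0 < eta ->
  measurable [set p : n.-tuple (X * Y) * H |
                eta < `|pop_risk ev P p.2 - emp_risk ev p.1 p.2|] ->
  (product_measure1 Pn Q
     [set p | (eta < `|pop_risk ev P p.2 - emp_risk ev p.1 p.2|)%R]
    <= (2 * expR (- (2 * n%:R * eta ^+ 2)))%:E)%E.
Proof.
move=> Pn_prod m_err eta_gt0 mE.
apply: product_measure1_ysection_le => // h.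
rewrite (_ : ysection _ h = [set s | eta < `|pop_risk ev P h - emp_risk ev s h|]).
  apply: product_measure_hoeffding => //.
  rewrite (_ : [set z | _] = xsection [set p | ev p.1 p.2.1 <> p.2.2] h).
    exact: measurable_xsection.
  by apply/seteqP; split => z; rewrite /xsection /= in_setE.
by apply/seteqP; split => s; rewrite /ysection /= in_setE.
Qed.

Theorem corollary4 (R : realType)
  (dX dY dH : measure_display)
  (X : measurableType dX) (Y : measurableType dY) (H : measurableType dH)
  (ev : H -> X -> Y) (n : nat)
  (P : probability (X * Y)%type R)
  (Pn : probability (n.-tuple (X * Y)%type) R)
  (k : R.-pker (n.-tuple (X * Y)%type) ~> H)
  (eta alpha : R) :
  is_product_measure P Pn ->
  measurable [set p : H * (X * Y) | ev p.1 p.2.1 <> p.2.2] ->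
  joint_law Pn k `<< product_measure1 Pn (out_law Pn k) ->
  0 < eta < 1 ->
  let E := [set p : n.-tuple (X * Y) * H |
              `|pop_risk ev P p.2 - emp_risk ev p.1 p.2| > eta] in
  measurable E ->
  1 < alpha ->
  (joint_law Pn k E <=
    expeR (((alpha - 1) / alpha)%:E *
      (sibson_mi alpha Pn (joint_law Pn k) + (ln 2)%:E
        - (2 * n%:R * eta ^+ 2)%:E)))%E.
Proof.
move=> Pn_prod m_err _ /andP[eta_gt0 _] E mE alpha_gt1.
pose c := 2 * expR (- (2 * n%:R * eta ^+ 2)).
have c_gt0 : 0 < c by rewrite mulr_gt0 ?expR_gt0.
have PnQ_E Q := product_measure1_risk_deviation Q Pn_prod m_err eta_gt0 mE.
have th_gt0 : 0 < (alpha - 1) / alpha.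
  by rewrite divr_gt0 ?subr_gt0 // (lt_trans _ alpha_gt1).
have PSH_E_ge0 : (0 <= joint_law Pn k E)%E.
  by apply: integral_ge0 => s _; exact: measure_ge0.
rewrite -addeA -EFinB (_ : ln 2 - _ = ln c); last first.
  by rewrite lnM ?posrE ?expR_gt0 // expRK.
apply: le_expeR_ereal_inf => // _ [Q ->].
apply: le_expeR_ereal_inf => // _ [f [f_dens ->]].
exact (density_renyi_bound f_dens mE alpha_gt1 c_gt0 (PnQ_E Q)).
Qed.
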